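(* Let $p\ge 1$ and $n\ge p$ be integers. Then $$S_{n,s}\cap S_{n+1,s}=\varnothing\qquad\text{and}\qquad S_{n,s}\cap S_{n+2,s}=\varnothing .$$ That is, no real number $\Lambda$ is simultaneously an eigenvalue of order $n$ with an even eigenfunction and an eigenvalue of order $m$ with an even eigenfunction, when $m=n+1$ or $m=n+2$.
   Context: Fix an integer $p\ge 1$. For an integer $k\ge p$ and a real number $\Lambda$, define the differential operator on $[-1,1]$ $$L^{2k}(\Lambda)=(-1)^k\frac{d^{2k}}{dx^{2k}}-\Lambda(-1)^{k-p}\frac{d^{2k-2p}}{dx^{2k-2p}}.$$ A real number $\Lambda$ is an eigenvalue of order $k$ if there is a real function $z\in C^{2k}[-1,1]$, $z\not\equiv 0$, such that - $L^{2k}(\Lambda)z=0$ on $[-1,1]$, and - $z^{(j)}(-1)=z^{(j)}(1)=0$ for $j=0,\dots,k-1$. Such a $z$ is called an eigenfunction of order $k$ with eigenvalue $\Lambda$. These eigenvalues and eigenfunctions are exactly the critical values and critical points of the Rayleigh quotient $$\Phi_k(u)=\frac{\int_{-1}^1 (u^{(k)})^2\,dx}{\int_{-1}^1 (u^{(k-p)})^2\,dx}$$ on $\mathring W_2^k(-1,1)$. Here $\mathring W_2^k(-1,1)$ denotes the functions $u\in C^{k-1}[-1,1]$ with $u^{(j)}(\pm1)=0$ for $j<k$ and $u^{(k)}\in L_2$. Let $S_{k,s}$ (resp. $S_{k,a}$) denote the set of eigenvalues of order $k$ that admit an even (resp. odd) eigenfunction of order $k$. *)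

From Stdlib Require Import Reals Lra Lia.
Open Scope R_scope.

(* Functions are taken
   on all of R. *)
Definition deriv_family (z : R -> R) (m : nat) (D : nat -> R -> R) : Prop :=
  (forall x, D 0%nat x = z x) /\
  (forall (j : nat) (x : R), (j < m)%nat -> derivable_pt_lim (D j) x (D (S j) x)) /\
  (forall x, -1 <= x <= 1 -> continuity_pt (D m) x).

Definition eigenfunction (p k : nat) (Lam : R) (z : R -> R) : Prop :=
  exists D : nat -> R -> R,
    deriv_family z (2 * k) D /\
    (exists x, -1 <= x <= 1 /\ z x <> 0) /\
    (forall x, -1 <= x <= 1 ->
        (-1) ^ k * D (2 * k)%nat x
        - Lam * (-1) ^ (k - p) * D (2 * k - 2 * p)%nat x = 0) /\
    (forall j : nat, (j < k)%nat -> D j (-1) = 0 /\ D j 1 = 0).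

Definition S_sym (p k : nat) (Lam : R) : Prop :=
  exists z : R -> R, eigenfunction p k Lam z /\
    (forall x, -1 <= x <= 1 -> z (- x) = z x).

From Stdlib Require Import Reals Lra Lia Classical.
From Coquelicot Require Import Coquelicot.
Open Scope R_scope.

(* Write [D j] for the [j]-th derivative and [a k] for the integral of [(D k)^2] over [-1,1].
   For a solution of order [m] with one Dirichlet condition too many at each end,
   integration by parts turns the equation into [a m = nu a (m-p)] and
   [a (m+1) = nu a (m+1-p)], while Cauchy-Schwarz makes [k |-> a k] log-convex.
   The ratios [a k / a (k-1)] are then nondecreasing, so both relations force equality
   in Cauchy-Schwarz: [D (m+1) = - t D (m-1)] with [t > 0], and the conserved
   quantity [D m ^ 2 + t D (m-1) ^ 2] makes the solution vanish.  Hence a nontrivial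
   even eigenfunction of order [n] has [D n 1 <> 0].

   Pairing an even eigenfunction [F] of order [n] with an even eigenfunction [G] of
   order [n+1] and moving all derivatives from one factor to the other, the two
   equations cancel and only the boundary term [2 F^(n)(1) G^(n+1)(1)] survives,
   which is absurd.  For order [n+2] the same computation yields
   [F^(n)(1) G^(n+3)(1) = F^(n+1)(1) G^(n+2)(1)]; therefore [G'' + c F] is, for a
   suitable [c], a solution of order [n+1] with [n+2] Dirichlet conditions, so it
   vanishes, and then [G] itself solves that overdetermined problem. *)

Definition inI (x : R) : Prop := -1 <= x <= 1.
Definition continuous_I (f : R -> R) : Prop := forall x, inI x -> continuity_pt f x.
Definition Int (f : R -> R) : R := RInt f (-1) 1.

Lemma inI_Rmin_Rmax a b x : -1 <= a -> b <= 1 -> Rmin a b <= x <= Rmax a b -> a <= b -> inI x.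
Proof. intros Ha Hb Hx Hab; rewrite Rmin_left, Rmax_right in Hx by lra; unfold inI; lra. Qed.

Lemma ex_RInt_sub_I f a b : continuous_I f -> -1 <= a -> a <= b -> b <= 1 -> ex_RInt f a b.
Proof.
  intros Hf Ha Hab Hb; apply (ex_RInt_continuous (V := R_CompleteNormedModule)).
  intros z Hz; apply continuity_pt_filterlim, Hf, (inI_Rmin_Rmax a b); auto.
Qed.

Lemma ex_RInt_I f : continuous_I f -> ex_RInt f (-1) 1.
Proof. intros Hf; apply ex_RInt_sub_I; auto; lra. Qed.

Lemma continuous_I_plus f g : continuous_I f -> continuous_I g -> continuous_I (fun x => f x + g x).
Proof. intros Hf Hg x Hx; apply (continuity_pt_plus f g); auto. Qed.

Lemma continuous_I_mult f g : continuous_I f -> continuous_I g -> continuous_I (fun x => f x * g x).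
Proof. intros Hf Hg x Hx; apply (continuity_pt_mult f g); auto. Qed.

Lemma continuous_I_const c : continuous_I (fun _ => c).
Proof. intros x _; apply continuity_pt_const; intros a b; reflexivity. Qed.

Lemma continuous_I_of_derivable f f' :
  (forall x, inI x -> derivable_pt_lim f x (f' x)) -> continuous_I f.
Proof. intros H x Hx; apply derivable_continuous_pt; exists (f' x); apply H; auto. Qed.

Ltac continuous_I :=
  repeat first [ apply continuous_I_plus | apply continuous_I_mult | apply continuous_I_const ];
  auto.

Lemma Int_plus f g : continuous_I f -> continuous_I g ->
  Int (fun x => f x + g x) = Int f + Int g.
Proof. intros Hf Hg; exact (RInt_plus f g (-1) 1 (ex_RInt_I f Hf) (ex_RInt_I g Hg)). Qed.

Lemma Int_scal c f : continuous_I f -> Int (fun x => c * f x) = c * Int f.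
Proof. intros Hf; exact (RInt_scal f (-1) 1 c (ex_RInt_I f Hf)). Qed.

Lemma Int_ext f g : (forall x, inI x -> f x = g x) -> Int f = Int g.
Proof.
  intros H; apply RInt_ext; intros x Hx; apply H, (inI_Rmin_Rmax (-1) 1); lra.
Qed.

Lemma Int_0 : Int (fun _ => 0) = 0.
Proof. unfold Int; rewrite RInt_const; cbn; unfold mult; cbn; ring. Qed.

Lemma Int_ge0 f : continuous_I f -> (forall x, inI x -> 0 <= f x) -> 0 <= Int f.
Proof.
  intros Hf H; apply RInt_ge_0; [lra | apply ex_RInt_I; auto |].
  intros x Hx; apply H; unfold inI; lra.
Qed.

Lemma Int_gt0 f x0 : continuous_I f -> (forall x, inI x -> 0 <= f x) ->
  inI x0 -> 0 < f x0 -> 0 < Int f.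
Proof.
  intros Hf H Hx0 Hpos.
  destruct (Hf x0 Hx0 (f x0 / 2)) as [d [Hd Hnear]]; [lra |].
  set (c := Rmax (-1) (x0 - d / 2)); set (e := Rmin 1 (x0 + d / 2)).
  assert (Hc : -1 <= c /\ x0 - d / 2 <= c /\ c <= x0).
  { unfold c, inI in *; split; [apply Rmax_l | split; [apply Rmax_r |]].
    apply Rmax_lub; lra. }
  assert (He : e <= 1 /\ e <= x0 + d / 2 /\ x0 <= e).
  { unfold e, inI in *; split; [apply Rmin_l | split; [apply Rmin_r |]].
    apply Rmin_glb; lra. }
  assert (Hce : c < e).
  { unfold c, e, inI in *; unfold Rmax, Rmin; repeat destruct Rle_dec; lra. }
  assert (Hint : forall a b, -1 <= a -> a <= b -> b <= 1 -> 0 <= RInt f a b).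
  { intros a b Ha Hab Hb; apply RInt_ge_0; auto using ex_RInt_sub_I.
    intros; apply H; unfold inI; lra. }
  assert (Hmid : 0 < RInt f c e).
  { apply RInt_gt_0; [lra | |].
    - intros x Hx; destruct (Req_dec x x0) as [-> | Hne]; [lra |].
      assert (Hdist : R_dist x x0 < d) by (unfold R_dist; apply Rabs_def1; lra).
      specialize (Hnear x (conj (conj I (not_eq_sym Hne)) Hdist)).
      cbn in Hnear; unfold R_dist in Hnear; apply Rabs_def2 in Hnear; lra.
    - intros z Hz; apply continuity_pt_filterlim, Hf; unfold inI; lra. }
  unfold Int.
  rewrite <- (RInt_Chasles f (-1) c 1), <- (RInt_Chasles f c e 1)
    by (apply ex_RInt_sub_I; auto; lra).
  assert (0 <= RInt f (-1) c) by (apply Hint; lra).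
  assert (0 <= RInt f e 1) by (apply Hint; lra).
  change (0 < RInt f (-1) c + (RInt f c e + RInt f e 1)); lra.
Qed.

Lemma Int_eq0_ge0 f : continuous_I f -> (forall x, inI x -> 0 <= f x) ->
  Int f = 0 -> forall x, inI x -> f x = 0.
Proof.
  intros Hf H H0 x Hx; destruct (H x Hx) as [Hlt | Heq]; auto.
  pose proof (Int_gt0 f x Hf H Hx Hlt); lra.
Qed.

Lemma Int_sqr_eq0 f : continuous_I f -> Int (fun x => f x * f x) = 0 ->
  forall x, inI x -> f x = 0.
Proof.
  intros Hf H0 x Hx.
  assert (Hsq : f x * f x = 0).
  { apply (Int_eq0_ge0 (fun x => f x * f x)); auto; [continuous_I |].
    intros; apply Rle_0_sqr. }
  nra.
Qed.

Lemma derivable_pt_lim_zero_I h x l : (forall y, inI y -> h y = 0) -> inI x ->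
  derivable_pt_lim h x l -> l = 0.
Proof.
  intros H0 Hx Hd; destruct (Req_dec l 0) as [| Hl]; auto; exfalso.
  destruct (Hd (Rabs l)) as [[d Hdpos] Hdd]; [apply Rabs_pos_lt; auto |]; cbn in Hdd.
  (* a one-sided difference quotient staying inside [-1,1] is 0 *)
  set (s := Rmin (d / 2) 1).
  assert (Hs : 0 < s <= d / 2 /\ s <= 1)
    by (unfold s; split; [split; [apply Rmin_glb_lt; lra | apply Rmin_l] | apply Rmin_r]).
  set (h0 := if Rlt_dec x 0 then s else - s).
  assert (Hh0 : h0 <> 0 /\ Rabs h0 < d /\ inI (x + h0)).
  { unfold h0, inI in *; destruct Rlt_dec.
    - rewrite Rabs_right by lra; repeat split; lra.
    - rewrite Rabs_left by lra; repeat split; lra. }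
  destruct Hh0 as [Hne [Hlt Hin]].
  specialize (Hdd h0 Hne Hlt); rewrite !H0 in Hdd by auto.
  replace ((0 - 0) / h0 - l) with (- l) in Hdd by (field; auto).
  rewrite Rabs_Ropp in Hdd; lra.
Qed.

Lemma derivable_pt_lim_unique_I f g x l1 l2 : (forall y, inI y -> f y = g y) -> inI x ->
  derivable_pt_lim f x l1 -> derivable_pt_lim g x l2 -> l1 = l2.
Proof.
  intros H Hx H1 H2.
  assert (Hd := derivable_pt_lim_minus f g x l1 l2 H1 H2).
  apply derivable_pt_lim_zero_I in Hd; auto; [lra |].
  intros y Hy; unfold minus_fct; rewrite H; auto; ring.
Qed.

Lemma derivable_pt_lim_0_const_I f : (forall y, inI y -> derivable_pt_lim f y 0) ->
  forall x, inI x -> f x = f (-1).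
Proof.
  intros H x Hx; unfold inI in Hx.
  assert (Hi : is_RInt (fun _ => 0) (-1) x (minus (f x) (f (-1)))).
  { apply (is_RInt_derive f (fun _ => 0)).
    - intros y Hy; apply is_derive_Reals, H, (inI_Rmin_Rmax (-1) x); lra.
    - intros y _; apply continuous_const. }
  apply (is_RInt_unique (V := R_CompleteNormedModule)) in Hi; rewrite RInt_const in Hi.
  unfold scal, minus, plus, opp in Hi; cbn in Hi; unfold mult in Hi; cbn in Hi; lra.
Qed.

Lemma Int_by_parts u u' v v' :
  (forall x, inI x -> derivable_pt_lim u x (u' x)) ->
  (forall x, inI x -> derivable_pt_lim v x (v' x)) ->
  continuous_I u' -> continuous_I v' ->
  Int (fun x => u' x * v x) = (u 1 * v 1 - u (-1) * v (-1)) - Int (fun x => u x * v' x).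
Proof.
  intros Hu Hv Hu' Hv'.
  assert (Cu := continuous_I_of_derivable u u' Hu).
  assert (Cv := continuous_I_of_derivable v v' Hv).
  assert (Hi : is_RInt (fun x => u' x * v x + u x * v' x) (-1) 1
                 (minus (u 1 * v 1) (u (-1) * v (-1)))).
  { apply (is_RInt_derive (fun x => u x * v x)); intros y Hy;
      assert (Hy' : inI y) by (apply (inI_Rmin_Rmax (-1) 1); lra).
    - apply is_derive_Reals, (derivable_pt_lim_mult u v); auto.
    - apply continuity_pt_filterlim; continuous_I. }
  apply (is_RInt_unique (V := R_CompleteNormedModule)) in Hi.
  fold (Int (fun x => u' x * v x + u x * v' x)) in Hi.
  rewrite Int_plus in Hi by continuous_I.
  unfold minus, plus, opp in Hi; simpl in Hi; lra.
Qed.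

Lemma Int_sqr_lin u v t : continuous_I u -> continuous_I v ->
  Int (fun x => (u x + t * v x) * (u x + t * v x))
  = Int (fun x => u x * u x) + 2 * t * Int (fun x => u x * v x)
    + t * t * Int (fun x => v x * v x).
Proof.
  intros Cu Cv.
  rewrite (Int_ext _ (fun x => (u x * u x + (2 * t) * (u x * v x)) + (t * t) * (v x * v x)))
    by (intros; ring).
  rewrite !Int_plus, !Int_scal; continuous_I.
Qed.

Lemma Cauchy_Schwarz_I u v : continuous_I u -> continuous_I v ->
  Int (fun x => u x * v x) ^ 2 <= Int (fun x => u x * u x) * Int (fun x => v x * v x).
Proof.
  intros Cu Cv.
  set (A := Int (fun x => u x * u x)); set (B := Int (fun x => u x * v x));
    set (C := Int (fun x => v x * v x)).
  assert (HA : 0 <= A) by (apply Int_ge0; continuous_I; intros; apply Rle_0_sqr).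
  assert (HC : 0 <= C) by (apply Int_ge0; continuous_I; intros; apply Rle_0_sqr).
  destruct HC as [HC | HC].
  - assert (H : 0 <= Int (fun x => (u x + (- B / C) * v x) * (u x + (- B / C) * v x)))
      by (apply Int_ge0; continuous_I; intros; apply Rle_0_sqr).
    rewrite Int_sqr_lin in H by auto; fold A B C in H.
    assert (Hprod : 0 <= (A + 2 * (- B / C) * B + (- B / C) * (- B / C) * C) * C)
      by (apply Rmult_le_pos; lra).
    replace ((A + 2 * (- B / C) * B + (- B / C) * (- B / C) * C) * C) with (A * C - B ^ 2)
      in Hprod by (field; lra).
    lra.
  - assert (Hv : forall x, inI x -> v x = 0) by (apply Int_sqr_eq0; auto).
    assert (HB : B = 0).
    { unfold B; rewrite (Int_ext _ (fun _ => 0)) by (intros x Hx; rewrite Hv; auto; ring).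
      apply Int_0. }
    rewrite HB, <- HC; nra.
Qed.

Lemma Cauchy_Schwarz_I_eq u v : continuous_I u -> continuous_I v ->
  0 < Int (fun x => v x * v x) ->
  Int (fun x => u x * v x) ^ 2 = Int (fun x => u x * u x) * Int (fun x => v x * v x) ->
  forall x, inI x -> u x = Int (fun x => u x * v x) / Int (fun x => v x * v x) * v x.
Proof.
  intros Cu Cv HC Heq x Hx.
  set (A := Int (fun x => u x * u x)) in *; set (B := Int (fun x => u x * v x)) in *;
    set (C := Int (fun x => v x * v x)) in *.
  assert (H0 : Int (fun x => (u x + (- B / C) * v x) * (u x + (- B / C) * v x)) = 0).
  { rewrite Int_sqr_lin by auto; fold A B C.
    apply (Rmult_eq_reg_r C); [| lra].
    replace ((A + 2 * (- B / C) * B + - B / C * (- B / C) * C) * C) with (A * C - B ^ 2)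
      by (field; lra).
    lra. }
  assert (Hz := Int_sqr_eq0 (fun x => u x + (- B / C) * v x) ltac:(continuous_I) H0 x Hx).
  assert (Hneg : B / C * v x = - (- B / C * v x)) by (unfold Rdiv; ring).
  lra.
Qed.

Lemma oscillator_zero f g t : 0 < t ->
  (forall x, inI x -> derivable_pt_lim f x (g x)) ->
  (forall x, inI x -> derivable_pt_lim g x (- t * f x)) ->
  f (-1) = 0 -> g (-1) = 0 -> forall x, inI x -> f x = 0.
Proof.
  intros Ht Hf Hg Hf0 Hg0 x Hx.
  (* the energy g^2 + t f^2 is conserved *)
  set (E := fun y => g y * g y + t * (f y * f y)).
  assert (HE : forall y, inI y -> derivable_pt_lim E y 0).
  { intros y Hy.
    replace 0 with ((- t * f y * g y + g y * (- t * f y)) + t * (g y * f y + f y * g y))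
      by ring.
    apply (derivable_pt_lim_plus (fun y => g y * g y) (fun y => t * (f y * f y)));
      [| apply (derivable_pt_lim_scal (fun y => f y * f y))];
      apply derivable_pt_lim_mult; auto. }
  pose proof (derivable_pt_lim_0_const_I E HE x Hx) as HEx; unfold E in HEx.
  rewrite Hf0, Hg0 in HEx.
  assert (0 <= g x * g x) by apply Rle_0_sqr.
  assert (0 <= f x * f x) by apply Rle_0_sqr.
  assert (f x * f x = 0) by nra.
  nra.
Qed.

Lemma log_convex_ratio_le (a : nat -> R) N i j :
  (forall k, (k <= N)%nat -> 0 < a k) ->
  (forall k, (1 <= k < N)%nat -> a k ^ 2 <= a (k - 1)%nat * a (S k)) ->
  (1 <= i <= j)%nat -> (j <= N)%nat -> a i / a (i - 1)%nat <= a j / a (j - 1)%nat.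
Proof.
  intros Hpos Hconv Hij HjN.
  assert (Hstep : forall k, (1 <= k < N)%nat -> a k / a (k - 1)%nat <= a (S k) / a (S k - 1)%nat).
  { intros k Hk; rewrite Nat.sub_succ, Nat.sub_0_r.
    assert (P0 := Hpos (k - 1)%nat ltac:(lia)); assert (P1 := Hpos k ltac:(lia)).
    apply (Rmult_le_reg_r (a (k - 1)%nat * a k)); [nra |].
    replace (a k / a (k - 1)%nat * (a (k - 1)%nat * a k)) with (a k ^ 2) by (field; lra).
    replace (a (S k) / a k * (a (k - 1)%nat * a k)) with (a (k - 1)%nat * a (S k))
      by (field; lra).
    apply Hconv; lia. }
  destruct Hij as [Hi Hij]; induction Hij as [| j Hij IH]; [lra |].
  eapply Rle_trans; [apply IH; lia | apply Hstep; lia].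
Qed.

Lemma log_convex_shift_eq (a : nat -> R) m p nu :
  (1 <= p <= m)%nat ->
  (forall k, (k <= S m)%nat -> 0 < a k) ->
  (forall k, (1 <= k <= m)%nat -> a k ^ 2 <= a (k - 1)%nat * a (S k)) ->
  a m = nu * a (m - p)%nat -> a (S m) = nu * a (S m - p)%nat ->
  a m ^ 2 = a (m - 1)%nat * a (S m).
Proof.
  intros Hp Hpos Hconv Hm HSm.
  assert (Hconv' : forall k, (1 <= k < S m)%nat -> a k ^ 2 <= a (k - 1)%nat * a (S k))
    by (intros; apply Hconv; lia).
  assert (P1 := Hpos (m - 1)%nat ltac:(lia)); assert (P2 := Hpos m ltac:(lia)).
  assert (P3 := Hpos (m - p)%nat ltac:(lia)).
  assert (Hnu : nu <> 0) by (intros ->; lra).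
  (* the ratio at [S m] equals the ratio at [S m - p], which cannot exceed the one at [m] *)
  assert (Hshift : a (S m) / a m = a (S m - p)%nat / a (m - p)%nat).
  { rewrite HSm, Hm; field; lra. }
  assert (Hlow := log_convex_ratio_le a (S m) (S m - p) m Hpos Hconv' ltac:(lia) ltac:(lia)).
  assert (Hup := log_convex_ratio_le a (S m) m (S m) Hpos Hconv' ltac:(lia) ltac:(lia)).
  replace (S m - p - 1)%nat with (m - p)%nat in Hlow by lia.
  replace (S m - 1)%nat with m in Hup by lia.
  assert (Hr : a m / a (m - 1)%nat = a (S m) / a m) by lra.
  apply (Rmult_eq_reg_r (/ (a (m - 1)%nat * a m))); [| apply Rinv_neq_0_compat; nra].
  transitivity (a m / a (m - 1)%nat); [field; lra |].
  rewrite Hr; field; lra.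
Qed.

Definition deriv_chain (D : nat -> R -> R) (M : nat) : Prop :=
  (forall j x, (j < M)%nat -> inI x -> derivable_pt_lim (D j) x (D (S j) x)) /\
  continuous_I (D M).

Section DerivChain.
Variables (D : nat -> R -> R) (M : nat).
Hypothesis HD : deriv_chain D M.

Lemma deriv_chain_cont j : (j <= M)%nat -> continuous_I (D j).
Proof.
  intros Hj; destruct (Nat.eq_dec j M) as [-> | Hne]; [apply HD |].
  apply (continuous_I_of_derivable _ (D (S j))); intros; apply HD; auto; lia.
Qed.

Lemma deriv_chain_le M' : (M' <= M)%nat -> deriv_chain D M'.
Proof.
  intros Hle; split; [intros; apply HD; auto; lia | apply deriv_chain_cont; auto].
Qed.

Lemma deriv_chain_zero : (forall x, inI x -> D 0%nat x = 0) ->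
  forall j, (j <= M)%nat -> forall x, inI x -> D j x = 0.
Proof.
  intros H0 j; induction j as [| j IH]; intros Hj x Hx; auto.
  apply (derivable_pt_lim_zero_I (D j) x); auto; [intros; apply IH; auto; lia |].
  apply HD; auto; lia.
Qed.

Lemma deriv_chain_descent k : (k <= M)%nat -> (forall x, inI x -> D k x = 0) ->
  (forall j, (j < k)%nat -> D j (-1) = 0) -> forall x, inI x -> D 0%nat x = 0.
Proof.
  induction k as [| k IH]; intros Hk H0 Hv; auto.
  apply IH; [lia | | intros; apply Hv; lia].
  intros y Hy; rewrite (derivable_pt_lim_0_const_I (D k)); auto.
  intros z Hz; rewrite <- (H0 z Hz); apply HD; auto; lia.
Qed.

End DerivChain.

Lemma deriv_chain_lin F G c M : deriv_chain F M -> deriv_chain G M ->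
  deriv_chain (fun j x => F j x + c * G j x) M.
Proof.
  intros [HF1 HF2] [HG1 HG2]; split; [| continuous_I].
  intros j x Hj Hx; apply (derivable_pt_lim_plus (F j) (fun x => c * G j x)); auto.
  apply (derivable_pt_lim_scal (G j)); auto.
Qed.

Lemma deriv_chain_shift2 G M : deriv_chain G (S (S M)) -> deriv_chain (fun j => G (S (S j))) M.
Proof. intros [H1 H2]; split; auto; intros j x Hj Hx; apply H1; auto; lia. Qed.

Definition pairing (F G : nat -> R -> R) (a b : nat) : R := Int (fun x => F a x * G b x).
Definition boundary (F G : nat -> R -> R) (a b : nat) : R :=
  F a 1 * G b 1 - F a (-1) * G b (-1).
Definition vanishes_at_ends (D : nat -> R -> R) (j : nat) : Prop := D j 1 = 0 /\ D j (-1) = 0.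

Lemma boundary_vanish_l F G a b : vanishes_at_ends F a -> boundary F G a b = 0.
Proof. intros [H1 H2]; unfold boundary; rewrite H1, H2; ring. Qed.

Lemma boundary_vanish_r F G a b : vanishes_at_ends G b -> boundary F G a b = 0.
Proof. intros [H1 H2]; unfold boundary; rewrite H1, H2; ring. Qed.

Lemma pairing_comm F G a b : pairing F G a b = pairing G F b a.
Proof. apply Int_ext; intros; ring. Qed.

Section Pairing.
Variables (F G : nat -> R -> R) (MF MG : nat).
Hypotheses (HF : deriv_chain F MF) (HG : deriv_chain G MG).

Lemma pairing_step a b : (a < MF)%nat -> (b < MG)%nat ->
  pairing F G (S a) b = boundary F G a b - pairing F G a (S b).
Proof.
  intros Ha Hb; apply Int_by_parts.
  - intros; apply HF; auto.
  - intros; apply HG; auto.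
  - apply (deriv_chain_cont F MF); auto.
  - apply (deriv_chain_cont G MG); auto.
Qed.

Lemma pairing_transfer j a b a' b' : a' = (a + j)%nat -> b' = (b + j)%nat ->
  (a' <= MF)%nat -> (b' <= MG)%nat ->
  (forall i, (i < j)%nat -> boundary F G (a + i) (b + j - 1 - i) = 0) ->
  pairing F G a' b = (-1) ^ j * pairing F G a b'.
Proof.
  intros -> ->; revert a b; induction j as [| j IH]; intros a b Ha Hb Hbd.
  - rewrite !Nat.add_0_r; simpl; ring.
  - rewrite <- plus_n_Sm, <- plus_Sn_m, (IH (S a) b)
      by (lia || (intros i Hi; rewrite <- (Hbd (S i)) by lia; f_equal; lia)).
    rewrite pairing_step by lia.
    assert (Hb0 := Hbd 0%nat ltac:(lia)).
    replace (a + 0)%nat with a in Hb0 by lia.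
    replace (b + S j - 1 - 0)%nat with (b + j)%nat in Hb0 by lia.
    rewrite Hb0; replace (S (b + j)) with (b + S j)%nat by lia; simpl; ring.
Qed.

Lemma pairing_ode_l a a' b mu : (a' <= MF)%nat -> (b <= MG)%nat ->
  (forall x, inI x -> F a x = mu * F a' x) -> pairing F G a b = mu * pairing F G a' b.
Proof.
  intros Ha Hb H; unfold pairing; rewrite <- Int_scal.
  - apply Int_ext; intros x Hx; rewrite H; auto; ring.
  - apply continuous_I_mult;
      [apply (deriv_chain_cont F MF) | apply (deriv_chain_cont G MG)]; auto.
Qed.

End Pairing.

Lemma pairing_ode_r F G MF MG : deriv_chain F MF -> deriv_chain G MG ->
  forall a b b' mu, (a <= MF)%nat -> (b' <= MG)%nat ->
  (forall x, inI x -> G b x = mu * G b' x) -> pairing F G a b = mu * pairing F G a b'.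
Proof.
  intros HF HG a b b' mu Ha Hb H; rewrite !(pairing_comm F G).
  apply (pairing_ode_l G F MG MF); auto.
Qed.

Lemma pow_m1_sqr k : (-1) ^ k * (-1) ^ k = 1.
Proof. rewrite <- Rpow_mult_distr; replace (-1 * -1) with 1 by ring; apply pow1. Qed.

Lemma pow_m1_odd_sum a b k : (a + b = 2 * k + 1)%nat -> (-1) ^ a * (-1) ^ b = -1.
Proof. intros H; rewrite <- pow_add, H, Nat.add_1_r; apply pow_1_odd. Qed.

Definition ode_solution (p k : nat) (mu : R) (D : nat -> R -> R) : Prop :=
  deriv_chain D (2 * k) /\
  forall x, inI x -> D (2 * k)%nat x = mu * D (2 * k - 2 * p)%nat x.

Definition dirichlet (D : nat -> R -> R) (k : nat) : Prop :=
  forall j, (j < k)%nat -> vanishes_at_ends D j.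

Definition energy (D : nat -> R -> R) (k : nat) : R := pairing D D k k.

Section Energy.
Variables (D : nat -> R -> R) (M V : nat).
Hypotheses (HD : deriv_chain D M) (HV : dirichlet D V).

Lemma pairing_diag q j : (j <= q)%nat -> (q + j <= M)%nat -> (q <= V)%nat ->
  pairing D D (q + j) (q - j) = (-1) ^ j * energy D q.
Proof.
  intros Hj HM HqV; apply (pairing_transfer D D M M HD HD j q (q - j)); try lia.
  intros i Hi; apply boundary_vanish_r, HV; lia.
Qed.

Lemma pairing_even_0 q : (2 * q <= M)%nat -> (q <= V)%nat ->
  pairing D D (2 * q) 0 = (-1) ^ q * energy D q.
Proof.
  intros HM HqV; rewrite <- (pairing_diag q q) by lia; f_equal; lia.
Qed.

Lemma pairing_even_2 q : (2 <= M)%nat -> (2 * q <= M)%nat -> (S q <= V)%nat ->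
  pairing D D (2 * q) 2 = - (-1) ^ q * energy D (S q).
Proof.
  intros H2 HM HqV; destruct q as [| q].
  - rewrite pairing_comm.
    transitivity (pairing D D (1 + 1) (1 - 1)); [reflexivity |].
    rewrite pairing_diag by lia; simpl; ring.
  - transitivity (pairing D D (S (S q) + q) (S (S q) - q)); [f_equal; lia |].
    rewrite pairing_diag by lia; simpl; ring.
Qed.

Lemma energy_ge0 k : (k <= M)%nat -> 0 <= energy D k.
Proof.
  intros Hk; apply Int_ge0; [apply continuous_I_mult; apply (deriv_chain_cont D M); auto |].
  intros; apply Rle_0_sqr.
Qed.

Lemma energy_log_convex k : (1 <= k)%nat -> (S k <= M)%nat -> (k <= V)%nat ->
  energy D k ^ 2 <= energy D (k - 1)%nat * energy D (S k).
Proof.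
  intros H1 HM HkV.
  assert (Hcs := Cauchy_Schwarz_I (D (S k)) (D (k - 1)%nat)
                   ltac:(apply (deriv_chain_cont D M HD); lia)
                   ltac:(apply (deriv_chain_cont D M HD); lia)).
  fold (pairing D D (S k) (k - 1)) (energy D (S k)) (energy D (k - 1)) in Hcs.
  replace (S k) with (k + 1)%nat in Hcs at 1 by lia.
  rewrite pairing_diag in Hcs by lia.
  replace (k + 1)%nat with (S k) in Hcs by lia.
  rewrite pow_1 in Hcs; unfold energy, pairing in *; nra.
Qed.

Lemma energy_log_convex_eq m : (1 <= m)%nat -> (S m <= M)%nat -> (m <= V)%nat ->
  0 < energy D (m - 1)%nat -> energy D m ^ 2 = energy D (m - 1)%nat * energy D (S m) ->
  forall x, inI x -> D (S m) x = - (energy D m / energy D (m - 1)%nat) * D (m - 1)%nat x.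
Proof.
  intros H1 HM HmV Hpos Hsq x Hx.
  assert (Hdiag := pairing_diag m 1 ltac:(lia) ltac:(lia) HmV).
  replace (m + 1)%nat with (S m) in Hdiag by lia.
  assert (Heq : pairing D D (S m) (m - 1) ^ 2 = energy D (S m) * energy D (m - 1)%nat)
    by (rewrite Hdiag, (Rmult_comm (energy D (S m))), <- Hsq; simpl; ring).
  assert (Hcs := Cauchy_Schwarz_I_eq (D (S m)) (D (m - 1)%nat)
                   ltac:(apply (deriv_chain_cont D M HD); lia)
                   ltac:(apply (deriv_chain_cont D M HD); lia) Hpos Heq x Hx).
  change (D (S m) x = pairing D D (S m) (m - 1) / energy D (m - 1)%nat * D (m - 1)%nat x)
    in Hcs.
  rewrite Hcs, Hdiag; simpl; field; lra.
Qed.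

End Energy.

Lemma energy_ode p m mu D : (1 <= p <= m)%nat -> ode_solution p m mu D -> dirichlet D (S m) ->
  exists nu, energy D m = nu * energy D (m - p)%nat /\
             energy D (S m) = nu * energy D (S m - p)%nat.
Proof.
  intros Hp [HD Hode] HV.
  assert (E0 := pairing_ode_l D D _ _ HD HD (2 * m) (2 * m - 2 * p) 0 mu ltac:(lia) ltac:(lia) Hode).
  assert (E2 := pairing_ode_l D D _ _ HD HD (2 * m) (2 * m - 2 * p) 2 mu ltac:(lia) ltac:(lia) Hode).
  replace (2 * m - 2 * p)%nat with (2 * (m - p))%nat in E0, E2 by lia.
  rewrite !(pairing_even_0 D (2 * m) (S m)) in E0 by (auto; lia).
  rewrite !(pairing_even_2 D (2 * m) (S m)) in E2 by (auto; lia).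
  replace (S (m - p)) with (S m - p)%nat in E2 by lia.
  exists (mu * (-1) ^ m * (-1) ^ (m - p)).
  assert (Hs := pow_m1_sqr m).
  split; apply (Rmult_eq_reg_l ((-1) ^ m)); try (apply pow_nonzero; lra).
  - rewrite E0; transitivity (mu * (-1) ^ (m - p) * energy D (m - p)%nat * 1); [ring |].
    rewrite <- Hs; ring.
  - replace ((-1) ^ m * energy D (S m)) with (- (- (-1) ^ m * energy D (S m))) by ring.
    rewrite E2; transitivity (mu * ((-1) ^ (m - p) * energy D (S m - p)%nat) * 1); [ring |].
    rewrite <- Hs; ring.
Qed.

Lemma ode_solution_dirichlet_zero p m mu D : (1 <= p <= m)%nat ->
  ode_solution p m mu D -> dirichlet D (S m) -> forall x, inI x -> D 0%nat x = 0.
Proof.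
  intros Hp Hsol HV; destruct Hsol as [HD Hode].
  destruct (classic (exists k, (k <= S m)%nat /\ energy D k = 0)) as [[k [Hk H0]] | Hne].
  { apply (deriv_chain_descent D (2 * m) HD k); [lia | | intros; apply HV; lia].
    apply Int_sqr_eq0; auto; apply (deriv_chain_cont D (2 * m) HD); lia. }
  assert (Hpos : forall k, (k <= S m)%nat -> 0 < energy D k).
  { intros k Hk; destruct (energy_ge0 D (2 * m) HD k ltac:(lia)) as [| H0]; auto.
    exfalso; apply Hne; eauto. }
  destruct (energy_ode p m mu D Hp (conj HD Hode) HV) as [nu [Hm HSm]].
  assert (Hsq := log_convex_shift_eq (energy D) m p nu Hp Hpos
                   ltac:(intros; apply (energy_log_convex D (2 * m) (S m)); auto; lia) Hm HSm).
  set (t := energy D m / energy D (m - 1)%nat).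
  assert (Ht : 0 < t) by (apply Rdiv_lt_0_compat; apply Hpos; lia).
  assert (Hprop := energy_log_convex_eq D (2 * m) (S m) HD HV m ltac:(lia) ltac:(lia)
                     ltac:(lia) (Hpos (m - 1)%nat ltac:(lia)) Hsq).
  assert (Hzero : forall x, inI x -> D (m - 1)%nat x = 0).
  { apply (oscillator_zero _ (D m) t Ht).
    - intros x Hx; replace m with (S (m - 1)) at 2 by lia; apply HD; auto; lia.
    - intros x Hx; rewrite <- Hprop by auto; apply HD; auto; lia.
    - apply HV; lia.
    - apply HV; lia. }
  assert (H0 : energy D (m - 1)%nat = 0).
  { unfold energy, pairing; rewrite <- Int_0; apply Int_ext; intros x Hx.
    rewrite Hzero; auto; ring. }
  pose proof (Hpos (m - 1)%nat ltac:(lia)); lra.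
Qed.

Definition alternating (D : nat -> R -> R) (M : nat) : Prop :=
  forall j, (j <= M)%nat -> forall x, inI x -> D j (- x) = (-1) ^ j * D j x.

Lemma alternating_of_even D M : deriv_chain D M ->
  (forall x, inI x -> D 0%nat (- x) = D 0%nat x) -> alternating D M.
Proof.
  intros HD H0 j; induction j as [| j IH]; intros Hj x Hx.
  - simpl; rewrite H0; auto; ring.
  - assert (Hmx : inI (- x)) by (unfold inI in *; lra).
    assert (Hl : derivable_pt_lim (comp (D j) (fun y => - y)) x (D (S j) (- x) * -1)).
    { apply derivable_pt_lim_comp; [| apply HD; auto; lia].
      apply (derivable_pt_lim_opp id x 1), derivable_pt_lim_id. }
    assert (Hr : derivable_pt_lim (fun y => (-1) ^ j * D j y) x ((-1) ^ j * D (S j) x))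
      by (apply (derivable_pt_lim_scal (D j)); apply HD; auto; lia).
    assert (Heq : forall y, inI y -> comp (D j) (fun y => - y) y = (-1) ^ j * D j y)
      by (intros y Hy; apply IH; auto; lia).
    assert (E := derivable_pt_lim_unique_I _ _ x _ _ Heq Hx Hl Hr).
    simpl; rewrite Rmult_assoc, <- E; ring.
Qed.

Lemma alternating_congr D D' M : (forall j x, (j <= M)%nat -> inI x -> D' j x = D j x) ->
  alternating D M -> alternating D' M.
Proof.
  intros Heq HD j Hj x Hx.
  rewrite (Heq j (- x)), (Heq j x) by (auto; unfold inI in *; lra); apply HD; auto.
Qed.

Lemma alternating_shift2_lin F G c M : alternating F M -> alternating G (S (S M)) ->
  alternating (fun j x => G (S (S j)) x + c * F j x) M.
Proof.
  intros HF HG j Hj x Hx; rewrite HF, HG by (auto; lia); simpl; ring.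
Qed.

Lemma alternating_at_ends D M j : alternating D M -> (j <= M)%nat -> D j (-1) = (-1) ^ j * D j 1.
Proof. intros HD Hj; rewrite <- (HD j Hj 1) by (unfold inI; lra); f_equal; ring. Qed.

Lemma vanishes_of_alternating D M j : alternating D M -> (j <= M)%nat -> D j 1 = 0 ->
  vanishes_at_ends D j.
Proof. intros HD Hj H1; split; auto; rewrite (alternating_at_ends D M), H1; auto; ring. Qed.

Lemma boundary_odd F G MF MG a b k : alternating F MF -> alternating G MG ->
  (a <= MF)%nat -> (b <= MG)%nat -> (a + b = 2 * k + 1)%nat ->
  boundary F G a b = 2 * (F a 1 * G b 1).
Proof.
  intros HF HG Ha Hb Hab; unfold boundary.
  rewrite (alternating_at_ends F MF a), (alternating_at_ends G MG b) by auto.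
  transitivity (F a 1 * G b 1 * (1 - (-1) ^ a * (-1) ^ b)); [ring |].
  rewrite (pow_m1_odd_sum a b k Hab); ring.
Qed.

(* [F (2n)] need not be differentiable at [-1] and [1], so the higher derivatives are
   read off from the equation [F (2n) = mu F (2n - 2p)] instead. *)
Definition ode_extension (F : nat -> R -> R) (n p : nat) (mu : R) : nat -> R -> R :=
  fun j => if (j <? 2 * n)%nat then F j else fun x => mu * F (j - 2 * p)%nat x.

Section Extension.
Variables (p n : nat) (mu : R) (F : nat -> R -> R).
Hypotheses (Hp : (1 <= p <= n)%nat) (HF : ode_solution p n mu F).

Lemma ode_extension_agree j x : (j <= 2 * n)%nat -> inI x -> ode_extension F n p mu j x = F j x.
Proof.
  intros Hj Hx; unfold ode_extension; destruct (Nat.ltb_spec j (2 * n)); auto.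
  replace j with (2 * n)%nat by lia; symmetry; apply HF; auto.
Qed.

Lemma ode_extension_solution : ode_solution p (S n) mu (ode_extension F n p mu).
Proof.
  destruct HF as [[Hd Hc] Hode]; split; [split |].
  - intros j x Hj Hx; unfold ode_extension.
    destruct (Nat.ltb_spec j (2 * n)), (Nat.ltb_spec (S j) (2 * n)); try lia.
    + apply Hd; auto.
    + replace (S j) with (2 * n)%nat by lia; rewrite <- Hode by auto.
      replace (2 * n)%nat with (S j) by lia; apply Hd; auto.
    + apply (derivable_pt_lim_scal (F (j - 2 * p)%nat)).
      replace (S j - 2 * p)%nat with (S (j - 2 * p)) by lia; apply Hd; auto; lia.
  - unfold ode_extension; destruct (Nat.ltb_spec (2 * S n) (2 * n)); [lia |].
    apply continuous_I_mult; [apply continuous_I_const |].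
    apply (deriv_chain_cont F (2 * n)); [split |]; auto; lia.
  - intros x Hx; rewrite (ode_extension_agree (2 * S n - 2 * p)) by (auto; lia).
    unfold ode_extension; destruct (Nat.ltb_spec (2 * S n) (2 * n)); [lia | reflexivity].
Qed.

End Extension.

Lemma ode_solution_shift2_lin p k mu F G c : (p <= k)%nat ->
  ode_solution p k mu F -> ode_solution p (S k) mu G ->
  ode_solution p k mu (fun j x => G (S (S j)) x + c * F j x).
Proof.
  intros Hpk [HF OF] [HG OG]; split.
  - apply deriv_chain_lin; auto; apply deriv_chain_shift2.
    replace (S (S (2 * k))) with (2 * S k)%nat by lia; auto.
  - intros x Hx; cbv beta.
    replace (S (S (2 * k))) with (2 * S k)%nat by lia.
    replace (S (S (2 * k - 2 * p))) with (2 * S k - 2 * p)%nat by lia.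
    rewrite OG, OF by auto; ring.
Qed.

Lemma ode_pairing_symm p a mu F G nF nG : (p <= a)%nat -> (2 * a + 1 < nF + nG + 2 * p)%nat ->
  ode_solution p a mu F -> dirichlet F nF -> ode_solution p (S a) mu G -> dirichlet G nG ->
  pairing F G (2 * a) 2 = pairing F G 0 (2 * S a).
Proof.
  intros Hpa Hidx [HF OF] VF [HG OG] VG.
  rewrite (pairing_ode_l F G _ _ HF HG (2 * a) (2 * a - 2 * p) 2 mu) by (auto; lia).
  rewrite (pairing_ode_r F G _ _ HF HG 0 (2 * S a) (2 * S a - 2 * p) mu) by (auto; lia).
  rewrite (pairing_transfer F G _ _ HF HG (2 * a - 2 * p) 0 2 (2 * a - 2 * p) (2 * S a - 2 * p));
    try lia.
  - replace (2 * a - 2 * p)%nat with (2 * (a - p))%nat by lia; rewrite pow_1_even; ring.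
  - intros i Hi; destruct (Nat.lt_ge_cases i nF).
    + apply boundary_vanish_l, VF; auto.
    + apply boundary_vanish_r, VG; lia.
Qed.

Lemma boundary_identity_succ p n mu F G : (1 <= p <= n)%nat ->
  ode_solution p n mu F -> dirichlet F n -> ode_solution p (S n) mu G -> dirichlet G (S n) ->
  boundary F G n (S n) = 0.
Proof.
  intros Hp HFs VF HGs VG.
  assert (Hsym := ode_pairing_symm p n mu F G n (S n) ltac:(lia) ltac:(lia) HFs VF HGs VG).
  destruct HFs as [HF _], HGs as [HG _].
  rewrite (pairing_transfer F G _ _ HF HG (n - 1) (S n) 2 (2 * n) (S n)) in Hsym
    by (lia || (intros; apply boundary_vanish_r, VG; lia)).
  rewrite (pairing_step F G _ _ HF HG),
    (pairing_transfer F G _ _ HF HG n 0 (S (S n)) n (2 * S n)) in Hsym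
    by (lia || (intros; apply boundary_vanish_l, VF; lia)).
  assert (Hsign := pow_m1_odd_sum (n - 1) n (n - 1) ltac:(lia)).
  rewrite Rmult_minus_distr_l, <- Rmult_assoc, Hsign in Hsym.
  apply (Rmult_eq_reg_l ((-1) ^ (n - 1))); [| apply pow_nonzero; lra].
  lra.
Qed.

Lemma boundary_identity_succ2 p n mu F G : (1 <= p <= n)%nat ->
  ode_solution p (S n) mu F -> dirichlet F n ->
  ode_solution p (S (S n)) mu G -> dirichlet G (S (S n)) ->
  boundary F G (S n) (S (S n)) = boundary F G n (S (S (S n))).
Proof.
  intros Hp HFs VF HGs VG.
  assert (Hsym := ode_pairing_symm p (S n) mu F G n (S (S n)) ltac:(lia) ltac:(lia)
                    HFs VF HGs VG).
  destruct HFs as [HF _], HGs as [HG _].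
  rewrite (pairing_transfer F G _ _ HF HG n (S (S n)) 2 (2 * S n) (S (S n))) in Hsym
    by (lia || (intros; apply boundary_vanish_r, VG; lia)).
  rewrite (pairing_step F G _ _ HF HG), (pairing_step F G _ _ HF HG),
    (pairing_transfer F G _ _ HF HG n 0 (S (S (S (S n)))) n (2 * S (S n))) in Hsym
    by (lia || (intros; apply boundary_vanish_l, VF; lia)).
  set (s := (-1) ^ n) in Hsym; set (P := pairing F G 0 (2 * S (S n))) in Hsym.
  assert (Hsq : s * s = 1) by apply pow_m1_sqr.
  apply Rminus_diag_uniq, (Rmult_eq_reg_l s); [| apply pow_nonzero; lra].
  assert (Hsq' : s * s * P = P) by (rewrite Hsq; ring).
  lra.
Qed.

Record even_eigenfunction (p k : nat) (mu : R) (D : nat -> R -> R) : Prop := {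
  even_ode : ode_solution p k mu D;
  even_dirichlet : dirichlet D k;
  even_alternating : alternating D (2 * k);
  even_nontrivial : exists x, inI x /\ D 0%nat x <> 0 }.

Lemma eigen_equation_normalize k p Lam A B : (p <= k)%nat ->
  (-1) ^ k * A - Lam * (-1) ^ (k - p) * B = 0 -> A = Lam * (-1) ^ p * B.
Proof.
  intros Hpk H.
  assert (Hk : (-1) ^ k = (-1) ^ (k - p) * (-1) ^ p) by (rewrite <- pow_add; f_equal; lia).
  assert (Hs := pow_m1_sqr (k - p)); assert (Ht := pow_m1_sqr p).
  rewrite Hk in H.
  set (s := (-1) ^ (k - p)) in *; set (t := (-1) ^ p) in *; clearbody s t.
  transitivity ((s * s) * (t * t) * A); [rewrite Hs, Ht; ring |].
  transitivity (s * t * (s * t * A - Lam * s * B) + Lam * t * B * (s * s)); [ring |].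
  rewrite H, Hs; ring.
Qed.

Lemma even_eigenfunction_of_S_sym p k Lam : (p <= k)%nat -> S_sym p k Lam ->
  exists D, even_eigenfunction p k (Lam * (-1) ^ p) D.
Proof.
  intros Hpk [z [[D [[H0 [Hd Hc]] [[x0 [Hx0 Hz]] [Hode Hbc]]]] Hev]].
  assert (HD : deriv_chain D (2 * k))
    by (split; [intros; apply Hd | intros x Hx; apply Hc]; auto).
  exists D; split.
  - split; auto; intros x Hx; apply eigen_equation_normalize with (k := k); auto.
  - intros j Hj; destruct (Hbc j Hj); split; auto.
  - apply alternating_of_even; auto; intros x Hx; rewrite !H0; auto.
  - exists x0; rewrite H0; auto.
Qed.

Lemma even_eigenfunction_top p m mu D : (1 <= p <= m)%nat ->
  even_eigenfunction p m mu D -> D m 1 <> 0.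
Proof.
  intros Hp [Hsol HV Halt [x0 [Hx0 Hne]]] Hm; apply Hne.
  apply (ode_solution_dirichlet_zero p m mu D); auto.
  intros j Hj; destruct (Nat.lt_ge_cases j m); auto.
  replace j with m by lia; apply (vanishes_of_alternating D (2 * m)); auto; lia.
Qed.

Lemma even_eigenfunction_succ_absurd p n mu F G : (1 <= p <= n)%nat ->
  even_eigenfunction p n mu F -> even_eigenfunction p (S n) mu G -> False.
Proof.
  intros Hp HF HG.
  assert (Hbd := boundary_identity_succ p n mu F G Hp
                   (even_ode _ _ _ _ HF) (even_dirichlet _ _ _ _ HF)
                   (even_ode _ _ _ _ HG) (even_dirichlet _ _ _ _ HG)).
  rewrite (boundary_odd F G (2 * n) (2 * S n) n (S n) n) in Hbd
    by (apply (even_alternating _ _ _ _ HF) || apply (even_alternating _ _ _ _ HG) || lia).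
  apply (Rmult_integral_contrapositive (F n 1) (G (S n) 1)); [split | lra].
  - apply (even_eigenfunction_top p n mu); auto.
  - apply (even_eigenfunction_top p (S n) mu); auto; lia.
Qed.

Lemma ode_solution_of_shift2_lin_zero p k mu F G c : (p <= k)%nat ->
  ode_solution p k mu F -> deriv_chain G (2 * S k) ->
  (forall j x, (j <= 2 * k)%nat -> inI x -> G (S (S j)) x + c * F j x = 0) ->
  ode_solution p (S k) mu G.
Proof.
  intros Hpk [_ OF] HG Hzero; split; auto; intros x Hx.
  assert (Z1 := Hzero (2 * k)%nat x ltac:(lia) Hx).
  assert (Z2 := Hzero (2 * k - 2 * p)%nat x ltac:(lia) Hx).
  replace (S (S (2 * k))) with (2 * S k)%nat in Z1 by lia.
  replace (S (S (2 * k - 2 * p))) with (2 * S k - 2 * p)%nat in Z2 by lia.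
  rewrite OF in Z1 by auto.
  replace (G (2 * S k)%nat x) with (- c * (mu * F (2 * k - 2 * p)%nat x)) by lra.
  replace (G (2 * S k - 2 * p)%nat x) with (- c * F (2 * k - 2 * p)%nat x) by lra.
  ring.
Qed.

Lemma shift2_lin_at_one F G n j : F n 1 <> 0 -> dirichlet F n -> dirichlet G (S (S n)) ->
  F n 1 * G (S (S (S n))) 1 = F (S n) 1 * G (S (S n)) 1 -> (j < S (S n))%nat ->
  G (S (S j)) 1 + (- G (S (S n)) 1 / F n 1) * F j 1 = 0.
Proof.
  intros Hn VF VG Hbd Hj.
  destruct (Nat.lt_ge_cases j n) as [Hjn | Hjn].
  - rewrite (proj1 (VF j Hjn)), (proj1 (VG (S (S j)) ltac:(lia))); ring.
  - destruct (Nat.eq_dec j n) as [-> | Hne]; [field; auto |].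
    replace j with (S n) by lia.
    apply (Rmult_eq_reg_l (F n 1)); auto.
    transitivity (F n 1 * G (S (S (S n))) 1 - F (S n) 1 * G (S (S n)) 1); [field; auto |].
    rewrite Hbd; ring.
Qed.

Lemma even_eigenfunction_succ2_absurd p n mu F G : (1 <= p <= n)%nat ->
  even_eigenfunction p n mu F -> even_eigenfunction p (S (S n)) mu G -> False.
Proof.
  intros Hp HF HG.
  destruct (HF) as [OF VF AF _], (HG) as [OG VG AG [x0 [Hx0 Hne]]].
  set (Fe := ode_extension F n p mu).
  assert (Hagree : forall j x, (j <= 2 * n)%nat -> inI x -> Fe j x = F j x)
    by (intros; apply ode_extension_agree; auto).
  assert (Hone : inI 1) by (unfold inI; lra); assert (Hmone : inI (-1)) by (unfold inI; lra).
  assert (OFe : ode_solution p (S n) mu Fe) by (apply ode_extension_solution; auto).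
  assert (VFe : dirichlet Fe n)
    by (intros j Hj; split; rewrite Hagree by (auto; lia); apply VF; auto).
  assert (AFe : alternating Fe (2 * n)) by (apply (alternating_congr F); auto).
  assert (Hbd := boundary_identity_succ2 p n mu Fe G Hp OFe VFe OG VG).
  rewrite (boundary_odd Fe G (2 * n) (2 * S (S n)) (S n) (S (S n)) (S n)),
    (boundary_odd Fe G (2 * n) (2 * S (S n)) n (S (S (S n))) (S n)) in Hbd by (auto; lia).
  assert (Htop : Fe n 1 <> 0)
    by (rewrite Hagree by (auto; lia); apply (even_eigenfunction_top p n mu); auto).
  set (c := - G (S (S n)) 1 / Fe n 1).
  set (K := fun j x => G (S (S j)) x + c * Fe j x).
  assert (OK : ode_solution p (S n) mu K) by (apply ode_solution_shift2_lin; auto; lia).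
  assert (VK : dirichlet K (S (S n))).
  { intros j Hj; apply (vanishes_of_alternating K (2 * n)); [| lia |].
    - apply alternating_shift2_lin; auto; intros i Hi; apply AG; lia.
    - apply shift2_lin_at_one; auto; lra. }
  assert (Kz := deriv_chain_zero K _ (proj1 OK)
                  (ode_solution_dirichlet_zero p (S n) mu K ltac:(lia) OK VK)).
  apply Hne, (ode_solution_dirichlet_zero p (S n) mu G); auto; [lia |].
  apply (ode_solution_of_shift2_lin_zero p n mu F G c); [lia | auto | |].
  - apply (deriv_chain_le G (2 * S (S n))); [apply OG | lia].
  - intros j x Hj Hx; rewrite <- (Hagree j x) by auto; apply (Kz j); auto; lia.
Qed.

Theorem mainTheorem1 (p n : nat) (hp : (1 <= p)%nat) (hn : (p <= n)%nat) :
  forall Lam : R,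
    ~ (S_sym p n Lam /\ S_sym p (n + 1) Lam) /\
    ~ (S_sym p n Lam /\ S_sym p (n + 2) Lam).
Proof.
  intros Lam; split; intros [HF HG];
    destruct (even_eigenfunction_of_S_sym p n Lam hn HF) as [F HF'].
  - rewrite Nat.add_1_r in HG.
    destruct (even_eigenfunction_of_S_sym p (S n) Lam ltac:(lia) HG) as [G HG'].
    exact (even_eigenfunction_succ_absurd p n _ F G (conj hp hn) HF' HG').
  - replace (n + 2)%nat with (S (S n)) in HG by lia.
    destruct (even_eigenfunction_of_S_sym p (S (S n)) Lam ltac:(lia) HG) as [G HG'].
    exact (even_eigenfunction_succ2_absurd p n _ F G (conj hp hn) HF' HG').
Qed.
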